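(* Let $\lambda>0$ and $f:\mathbb{R}^n\to\mathbb{R}$ be twice continuously differentiable. Suppose there exist sequences $\{\varepsilon_g^k\}\downarrow0$, $\{\varepsilon_h^k\}\downarrow0$, a sequence $\{w^k\}\to w^*$, and a sequence $\{t_k\}\subseteq[t_{\min},t_{\max}]$ with $0<t_{\min}\le t_{\max}<+\infty$, such that for each $k$, $w^k$ is a strong $(\varepsilon_g^k,\varepsilon_h^k)$-2o point with respect to $t_k$, i.e. $\|\mathcal{G}_{t_k}(w^k)\|\le\varepsilon_g^k$ and $\lambda_{\min}((\nabla^2f(w^k))_{I^k_{\neq0}})\ge-\varepsilon_h^k$, where $I^k_{\neq0}=\{i:w^k_i\neq0\}$. Then $w^*$ satisfies $0\in\nabla f(w^* )+\lambda\partial\|w^*\|_1$ and $z^\top\nabla^2f(w^* )z\ge0$ for all $z\in\mathcal{C}(w^* )=\{z:z_i=0\text{ if }w^*_i=0\}$.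
   Context: $\mathcal{G}_t(x):=t(x-\mathrm{prox}_{\frac\lambda t\|\cdot\|_1}(x-\frac1t\nabla f(x)))$, where $\mathrm{prox}_h(z)=\arg\min_x\{h(x)+\frac12\|x-z\|^2\}$. For a symmetric matrix $A$ and index set $J$, $A_J$ is the principal submatrix indexed by $J$. *)

(* R^n is modelled as 'rV[R]_n. *)
From HB Require Import structures.
From mathcomp Require Import all_boot all_order all_algebra.
From mathcomp Require Import all_classical all_reals all_analysis.
Set Implicit Arguments. Unset Strict Implicit. Unset Printing Implicit Defensive.
Import Order.TTheory GRing.Theory Num.Theory.
Import numFieldNormedType.Exports.
Local Open Scope classical_set_scope.
Local Open Scope ring_scope.

Section Defs.
Variables (R : realType) (n : nat).
Implicit Types (x y z : 'rV[R]_n) (f : 'rV[R]_n -> R).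

Definition evec (i : 'I_n) : 'rV[R]_n := delta_mx 0 i.

Definition pderiv f (i : 'I_n) : 'rV[R]_n -> R := fun x => 'D_(evec i) f x.

Definition C2 f : Prop :=
  continuous f /\
  (forall i x, derivable f x (evec i)) /\
  (forall i, continuous (pderiv f i)) /\
  (forall i j x, derivable (pderiv f i) x (evec j)) /\
  (forall i j, continuous (pderiv (pderiv f i) j)).

Definition grad f x : 'rV[R]_n := \row_i pderiv f i x.
Definition hess f x : 'M[R]_n := \matrix_(i, j) pderiv (pderiv f i) j x.

Definition enorm x : R := Num.sqrt (\sum_i x 0 i ^+ 2).
Definition l1norm x : R := \sum_i `| x 0 i |.
Definition dotv x y : R := \sum_i x 0 i * y 0 i.

Definition is_argmin_prox (h : 'rV[R]_n -> R) z (p : 'rV[R]_n) : Prop :=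
  forall x, h p + 2^-1 * enorm (p - z) ^+ 2 <= h x + 2^-1 * enorm (x - z) ^+ 2.
Definition prox (h : 'rV[R]_n -> R) z : 'rV[R]_n := xget 0 (is_argmin_prox h z).

Definition gradmap f (lam t : R) x : 'rV[R]_n :=
  t *: (x - prox (fun y => (lam / t) * l1norm y) (x - t^-1 *: grad f x)).

Definition subdiff (h : 'rV[R]_n -> R) x : set 'rV[R]_n :=
  [set v | forall y, h x + dotv v (y - x) <= h y].

Definition psubmx (A : 'M[R]_n) (J : {set 'I_n}) : 'M[R]_#|J| :=
  \matrix_(i, j) A (enum_val i) (enum_val j).

Definition lambda_min_ge m (A : 'M[R]_m) (c : R) : Prop :=
  forall a, eigenvalue A a -> c <= a.

Definition nzset x : {set 'I_n} := [set i | x 0 i != 0].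

End Defs.

From HB Require Import structures.
From mathcomp Require Import all_boot all_order all_algebra.
From mathcomp Require Import all_classical all_reals all_analysis.
From mathcomp Require Import ring lra.
Set Implicit Arguments. Unset Strict Implicit. Unset Printing Implicit Defensive.
Import Order.TTheory GRing.Theory Num.Theory.
Import numFieldNormedType.Exports.
Local Open Scope classical_set_scope.
Local Open Scope ring_scope.

(* First order: the prox of a scaled l1 norm is soft thresholding, so each
   coordinate of the gradient mapping G = G_t(w) exhibits (G - grad f(w)) / lam
   as a subgradient of the absolute value at the proximal point w - G / t.
   As G -> 0 the proximal points tend to w* and this relation, being closed,
   passes to the limit.
   Second order: by Schwarz's theorem the Hessian is symmetric, and for a
   symmetric matrix the infimum of the Rayleigh quotient is an eigenvalue, so
   the eigenvalue bound on the principal submatrix at w^k bounds z' H(w^k) z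
   below by -eps_h^k |z|^2 for every z supported on supp w^k.  Eventually
   supp w^k contains supp w*, and the Hessian is continuous. *)

Section QuadraticForm.
Variable R : realType.
Implicit Types (m : nat).

Definition bform m (A : 'M[R]_m) (x y : 'rV[R]_m) : R := (x *m A *m y^T) 0 0.
Definition sqnorm m (x : 'rV[R]_m) : R := \sum_i x 0 i ^+ 2.
Definition mxl1 m (A : 'M[R]_m) : R := \sum_i \sum_j `|A i j|.

Lemma bformE m (A : 'M[R]_m) x y :
  bform A x y = \sum_i \sum_j x 0 i * A i j * y 0 j.
Proof.
rewrite /bform mxE [RHS]exchange_big; apply: eq_bigr => j _.
by rewrite mxE big_distrl; apply: eq_bigr => i _ /=; rewrite !mxE.
Qed.

Lemma bformC m (A : 'M[R]_m) x y : A^T = A -> bform A x y = bform A y x.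
Proof.
move=> symA; rewrite /bform.
transitivity ((x *m A *m y^T)^T 0 0); first by rewrite [RHS]mxE.
by rewrite !trmx_mul trmxK symA mulmxA.
Qed.

Lemma bformDl m (A : 'M[R]_m) x1 x2 y : bform A (x1 + x2) y = bform A x1 y + bform A x2 y.
Proof. by rewrite /bform !mulmxDl mxE. Qed.

Lemma bformDr m (A : 'M[R]_m) x y1 y2 : bform A x (y1 + y2) = bform A x y1 + bform A x y2.
Proof. by rewrite /bform linearD /= mulmxDr mxE. Qed.

Lemma bformZl m (A : 'M[R]_m) s x y : bform A (s *: x) y = s * bform A x y.
Proof. by rewrite /bform -!scalemxAl mxE. Qed.

Lemma bformZr m (A : 'M[R]_m) s x y : bform A x (s *: y) = s * bform A x y.
Proof. by rewrite /bform linearZ /= -scalemxAr mxE. Qed.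

Lemma bform0 m (A : 'M[R]_m) : bform A 0 0 = 0.
Proof. by rewrite /bform !mul0mx mxE. Qed.

Lemma bform1 m (x : 'rV[R]_m) : bform 1%:M x x = sqnorm x.
Proof. by rewrite /bform mulmx1 mxE; apply: eq_bigr => i _; rewrite mxE expr2. Qed.

Lemma bformB_scalar m (A : 'M[R]_m) a x :
  bform (A - a%:M) x x = bform A x x - a * sqnorm x.
Proof.
by rewrite -bform1 /bform mulmxBr mul_mx_scalar mulmxBl -scalemxAl mulmx1 !mxE.
Qed.

Lemma sqnorm_ge0 m (x : 'rV[R]_m) : 0 <= sqnorm x.
Proof. by apply: sumr_ge0 => i _; rewrite sqr_ge0. Qed.

Lemma sqnorm0 m : sqnorm (0 : 'rV[R]_m) = 0.
Proof. by rewrite /sqnorm big1 // => i _; rewrite mxE expr0n. Qed.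

Lemma ler_sqr_sqnorm m (x : 'rV[R]_m) i : x 0 i ^+ 2 <= sqnorm x.
Proof. by rewrite /sqnorm (bigD1 i) //= lerDl sumr_ge0 // => j _; rewrite sqr_ge0. Qed.

Lemma sqnorm_gt0 m (x : 'rV[R]_m) : x != 0 -> 0 < sqnorm x.
Proof.
move=> x_neq0; have [i xi_neq0] : exists i, x 0 i != 0.
  apply/existsP; apply: contraNT x_neq0; rewrite negb_exists => /forallP x0.
  by apply/eqP/rowP => i; rewrite mxE; apply/eqP; have := x0 i; rewrite negbK.
by apply: lt_le_trans (ler_sqr_sqnorm x i); rewrite lt_def sqr_ge0 andbT sqrf_eq0.
Qed.

Lemma ler_norm_bform m (A : 'M[R]_m) x : `|bform A x x| <= mxl1 A * sqnorm x.
Proof.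
rewrite bformE /mxl1 mulr_suml; apply: le_trans (ler_norm_sum _ _ _) _.
apply: ler_sum => i _; rewrite mulr_suml; apply: le_trans (ler_norm_sum _ _ _) _.
apply: ler_sum => j _; rewrite !normrM mulrAC [leRHS]mulrC.
apply: ler_wpM2r => //.
have := ler_sqr_sqnorm x i; have := ler_sqr_sqnorm x j.
rewrite -[x 0 i ^+ 2]real_normK ?num_real // -[x 0 j ^+ 2]real_normK ?num_real //.
have := normr_ge0 (x 0 i); have := normr_ge0 (x 0 j); nra.
Qed.

End QuadraticForm.

Section Eigenvalues.
Variable R : realType.
Implicit Types (m : nat).

Lemma psd_cauchy_schwarz m (C : 'M[R]_m) x y :
  C^T = C -> (forall z, 0 <= bform C z z) ->
  bform C x y ^+ 2 <= bform C x x * bform C y y.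
Proof.
move=> symC psdC.
have quad_ge0 s : 0 <= bform C x x + 2 * s * bform C x y + s ^+ 2 * bform C y y.
  have := psdC (x + s *: y).
  by rewrite !bformDl !bformDr !bformZl !bformZr (bformC x y symC) -!mulrA; lra.
move: quad_ge0 (psdC x) (psdC y).
set a := bform C x x; set b := bform C x y; set c := bform C y y.
move=> quad_ge0 a_ge0 c_ge0.
have [c0|c_neq0] := eqVneq c 0.
  rewrite c0 mulr0; have [->|b_neq0] := eqVneq b 0; first by rewrite expr0n.
  have := quad_ge0 (- (a + 1) / (2 * b)); rewrite c0 mulr0 addr0.
  have -> : 2 * (- (a + 1) / (2 * b)) * b = - (a + 1) by field.
  lra.
have c_gt0 : 0 < c by rewrite lt_def c_neq0.
have := quad_ge0 (- b / c).
have -> : a + 2 * (- b / c) * b + (- b / c) ^+ 2 * c = a - b ^+ 2 / c by field.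
by rewrite subr_ge0 ler_pdivrMr // mulrC.
Qed.

Lemma psd_unitmx_coercive m (C : 'M[R]_m) :
  C^T = C -> (forall z, 0 <= bform C z z) -> C \in unitmx ->
  exists2 K, 0 < K & forall z, sqnorm z <= K * bform C z z.
Proof.
move=> symC psdC unitC; set M := invmx C.
have K_ge0 : 0 <= mxl1 M^T by apply: sumr_ge0 => i _; apply: sumr_ge0.
exists (mxl1 M^T + 1) => [|z]; first by rewrite ltr_wpDl.
have CzM : bform C z (z *m M^T) = sqnorm z.
  by rewrite -bform1 /bform trmx_mul trmxK mulmxA -(mulmxA z C M) mulmxV // mulmx1.
have MzM : bform C (z *m M^T) (z *m M^T) = bform M^T z z.
  by rewrite /bform trmx_mul trmxK !mulmxA -(mulmxA _ C M) mulmxV // mulmx1.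
have := psd_cauchy_schwarz z (z *m M^T) symC psdC; rewrite CzM MzM => cs.
have bM := le_trans (ler_norm _) (ler_norm_bform M^T z).
move: (psdC z) (sqnorm_ge0 z) cs bM.
set q := bform C z z; set s := sqnorm z; set K := mxl1 M^T => q_ge0 s_ge0 cs bM.
have [s0|s_neq0] := eqVneq s 0; first by rewrite s0 mulr_ge0 // addr_ge0.
have s_gt0 : 0 < s by rewrite lt_def s_neq0.
have : s * s <= q * K * s by rewrite -expr2 -mulrA; apply: le_trans cs (ler_wpM2l q_ge0 bM).
rewrite ler_pM2r // => s_le; nra.
Qed.

(* The infimum of the Rayleigh quotient is an eigenvalue: otherwise the shifted
   form would be coercive, and the infimum could be raised. *)
Lemma rayleigh_inf_eigenvalue m (B : 'M[R]_m.+1) : B^T = B ->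
  exists2 mu, eigenvalue B mu & forall z, mu * sqnorm z <= bform B z z.
Proof.
move=> symB.
pose S := [set bform B z z / sqnorm z | z in [set z | z != 0]].
have S_lb : has_lbound S.
  exists (- mxl1 B) => _ [z /= z_neq0 <-].
  rewrite ler_pdivlMr ?sqnorm_gt0 // mulNr.
  by have := ler_norm_bform B z; rewrite ler_norml => /andP[].
have S_neq0 : S !=set0.
  pose u : 'rV[R]_m.+1 := const_mx 1.
  have u_neq0 : u != 0.
    by apply/eqP => /rowP /(_ 0); rewrite !mxE; apply/eqP; exact: oner_neq0.
  by exists (bform B u u / sqnorm u); exists u.
pose mu := inf S.
have mu_lb z : mu * sqnorm z <= bform B z z.
  have [->|z_neq0] := eqVneq z 0; first by rewrite bform0 sqnorm0 mulr0.
  by rewrite -ler_pdivlMr ?sqnorm_gt0 //; apply: (ge_inf S_lb); exists z.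
exists mu => //.
pose C := B - mu%:M.
have symC : C^T = C by rewrite linearB /= tr_scalar_mx symB.
have psdC z : 0 <= bform C z z by rewrite bformB_scalar subr_ge0.
have : \det C == 0.
  apply: contraT => detC_neq0.
  have unitC : C \in unitmx by rewrite unitmxE unitfE.
  have [K K_gt0 coerC] := psd_unitmx_coercive symC psdC unitC.
  suff : mu + K^-1 <= mu by rewrite gerDl leNgt invr_gt0 K_gt0.
  apply: (lb_le_inf S_neq0) => _ [z /= z_neq0 <-].
  have s_gt0 := sqnorm_gt0 z_neq0.
  have := coerC z; rewrite bformB_scalar -ler_pdivrMl // => coer.
  by rewrite ler_pdivlMr // mulrDl addrC -lerBrDr.
case/det0P => v v_neq0 vC0; apply/eigenvalueP; exists v => //.
by apply/eqP; rewrite -subr_eq0 -mul_mx_scalar -mulmxBr vC0.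
Qed.

Lemma lambda_min_ge_bform m (B : 'M[R]_m) c x :
  B^T = B -> lambda_min_ge B c -> c * sqnorm x <= bform B x x.
Proof.
case: m B x => [|m] B x symB Bc.
  by rewrite thinmx0 bform0 sqnorm0 mulr0.
have [mu Bmu mu_lb] := rayleigh_inf_eigenvalue symB.
exact: le_trans (ler_wpM2r (sqnorm_ge0 x) (Bc _ Bmu)) (mu_lb x).
Qed.

Lemma sum_supp_enum_val n (J : {set 'I_n}) (F : 'I_n -> R) :
  (forall i, i \notin J -> F i = 0) ->
  \sum_i F i = \sum_(k < #|J|) F (enum_val k).
Proof.
move=> F0; rewrite (bigID (mem J)) /= [X in _ + X]big1 ?addr0 //.
by rewrite big_enum_val.
Qed.

Lemma lambda_min_ge_psubmx n (A : 'M[R]_n) (J : {set 'I_n}) c (z : 'rV[R]_n) :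
  A^T = A -> lambda_min_ge (psubmx A J) c ->
  (forall i, i \notin J -> z 0 i = 0) -> c * sqnorm z <= bform A z z.
Proof.
move=> symA AJc z_supp.
pose zJ : 'rV[R]_#|J| := \row_k z 0 (enum_val k).
have symAJ : (psubmx A J)^T = psubmx A J.
  by apply/matrixP => i j; rewrite !mxE -[in RHS]symA mxE.
have sqnormJ : sqnorm zJ = sqnorm z.
  rewrite /sqnorm (sum_supp_enum_val (J := J)) => [|i /z_supp ->]; last by rewrite expr0n.
  by apply: eq_bigr => k _; rewrite mxE.
have bformJ : bform (psubmx A J) zJ zJ = bform A z z.
  rewrite !bformE (sum_supp_enum_val (J := J)) => [|i /z_supp zi0]; last first.
    by rewrite big1 // => j _; rewrite zi0 !mul0r.
  apply: eq_bigr => k _; rewrite (sum_supp_enum_val (J := J)) => [|j /z_supp ->]; last first.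
    by rewrite mulr0.
  by apply: eq_bigr => l _; rewrite !mxE.
by rewrite -sqnormJ -bformJ; apply: lambda_min_ge_bform.
Qed.

End Eigenvalues.

Section SoftThresholding.
Variable R : realType.

Definition soft_thresh (c z : R) : R :=
  if c < z then z - c else if z < - c then z + c else 0.

(* The extra term [(r - s)^2 / 2] is what makes the proximal point unique. *)
Lemma soft_thresh_opt c z r : 0 <= c ->
  let s := soft_thresh c z in
  c * `|s| + 2^-1 * (s - z) ^+ 2 + 2^-1 * (r - s) ^+ 2 <= c * `|r| + 2^-1 * (r - z) ^+ 2.
Proof.
move=> c_ge0; rewrite /soft_thresh.
case: (ltrP c z) => h1.
  rewrite (ger0_norm (ltW _)) ?subr_gt0 //.
  by case: (lerP 0 r) => hr; [rewrite (ger0_norm hr) | rewrite (ltr0_norm hr)]; nra.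
case: (ltrP z (- c)) => h2.
  rewrite (ltr0_norm _); last lra.
  by case: (lerP 0 r) => hr; [rewrite (ger0_norm hr) | rewrite (ltr0_norm hr)]; nra.
rewrite normr0 mulr0.
by case: (lerP 0 r) => hr; [rewrite (ger0_norm hr) | rewrite (ltr0_norm hr)]; nra.
Qed.

Definition abs_subgrad (v p : R) : Prop := `|v| <= 1 /\ v * p = `|p|.

Lemma soft_thresh_subgrad c z : 0 < c ->
  abs_subgrad ((z - soft_thresh c z) / c) (soft_thresh c z).
Proof.
move=> c_gt0; have c_neq0 : c != 0 := lt0r_neq0 c_gt0.
rewrite /abs_subgrad /soft_thresh; case: ifP => h1.
  have -> : (z - (z - c)) / c = 1 by field.
  by rewrite normr1 mul1r ger0_norm // subr_ge0 ltW.
case: ifP => h2.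
  have -> : (z - (z + c)) / c = -1 by field.
  by rewrite normrN normr1 mulN1r ltr0_norm; [split | lra].
rewrite subr0 mulr0 normr0 normrM normfV (gtr0_norm c_gt0) ler_pdivrMr // mul1r.
by rewrite ler_norml !leNgt h1 h2.
Qed.

Lemma soft_thresh_step_subgrad (lam t y d : R) : 0 < lam -> 0 < t ->
  let G := t * (y - soft_thresh (lam / t) (y - t^-1 * d)) in
  abs_subgrad ((G - d) / lam) (y - G / t).
Proof.
move=> lam_gt0 t_gt0 /=.
have := soft_thresh_subgrad (y - t^-1 * d) (divr_gt0 lam_gt0 t_gt0).
move: (soft_thresh _ _) => s.
have [lam_neq0 t_neq0] := (lt0r_neq0 lam_gt0, lt0r_neq0 t_gt0).
have -> : y - t * (y - s) / t = s by field.
suff -> : (t * (y - s) - d) / lam = (y - t^-1 * d - s) / (lam / t) by [].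
by field; rewrite t_neq0.
Qed.

End SoftThresholding.

Section ProximalGradient.
Variables (R : realType) (n : nat).
Implicit Types (x z : 'rV[R]_n) (f : 'rV[R]_n -> R).

Lemma enorm_sqr x : enorm x ^+ 2 = sqnorm x.
Proof. by rewrite /enorm sqr_sqrtr // sqnorm_ge0. Qed.

Lemma ler_abs_enorm x i : `|x 0 i| <= enorm x.
Proof. by rewrite -sqrtr_sqr ler_sqrt ?sqnorm_ge0 // ler_sqr_sqnorm. Qed.

Lemma prox_l1_soft c z : 0 < c ->
  prox (fun y => c * l1norm y) z = \row_i soft_thresh c (z 0 i).
Proof.
move=> c_gt0; set p := prox _ z; set s := \row_i soft_thresh c (z 0 i).
pose obj x := c * l1norm x + 2^-1 * enorm (x - z) ^+ 2.
have objE x : obj x = \sum_i (c * `|x 0 i| + 2^-1 * (x 0 i - z 0 i) ^+ 2).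
  rewrite /obj enorm_sqr /l1norm /sqnorm !mulr_sumr -big_split /=.
  by apply: eq_bigr => i _; rewrite !mxE.
have s_strict x : obj s + 2^-1 * sqnorm (x - s) <= obj x.
  rewrite !objE /sqnorm mulr_sumr -big_split /=; apply: ler_sum => i _.
  by rewrite !mxE; apply: soft_thresh_opt; apply: ltW.
have half_ge0 : 0 <= 2^-1 :> R by rewrite invr_ge0.
have s_min : is_argmin_prox (fun y => c * l1norm y) z s.
  by move=> x; apply: le_trans (s_strict x); rewrite lerDl mulr_ge0 ?sqnorm_ge0.
have p_min : is_argmin_prox (fun y => c * l1norm y) z p := xgetPex 0 (ex_intro _ s s_min).
have : 2^-1 * sqnorm (p - s) <= 0.
  by have := le_trans (s_strict p) (p_min s); rewrite gerDl.
apply: contra_leP => /eqP; rewrite -subr_eq0 => /sqnorm_gt0 ps_gt0.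
by rewrite mulr_gt0 // invr_gt0.
Qed.

Lemma gradmap_coordE f (lam t : R) x i : 0 < lam -> 0 < t ->
  gradmap f lam t x 0 i =
  t * (x 0 i - soft_thresh (lam / t) (x 0 i - t^-1 * pderiv f i x)).
Proof. by move=> lam_gt0 t_gt0; rewrite /gradmap prox_l1_soft ?divr_gt0 // !mxE. Qed.

Lemma gradmap_subgrad f (lam t : R) x i : 0 < lam -> 0 < t ->
  let G := gradmap f lam t x 0 i in
  abs_subgrad ((G - pderiv f i x) / lam) (x 0 i - G / t).
Proof.
by move=> lam_gt0 t_gt0; rewrite /= gradmap_coordE //; apply: soft_thresh_step_subgrad.
Qed.

Lemma l1_subdiff_abs_subgrad (v x : 'rV[R]_n) :
  (forall i, abs_subgrad (v 0 i) (x 0 i)) -> v \in subdiff (@l1norm R n) x.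
Proof.
move=> vx; apply/mem_set => y; rewrite /l1norm /dotv -big_split /=.
apply: ler_sum => i _; have [v_le1 vx_abs] := vx i.
rewrite !mxE mulrBr vx_abs addrC subrK; apply: le_trans (ler_norm _) _.
by rewrite normrM ler_piMl.
Qed.

End ProximalGradient.

Section Schwarz.
Variables (R : realType) (n : nat).
Implicit Types (f g : 'rV[R]_n -> R) (x y v : 'rV[R]_n).

Lemma derive_along_line g y v a : derivable g (a *: v + y) v ->
  is_derive a 1 (fun s : R => g (s *: v + y)) ('D_v g (a *: v + y)).
Proof.
move=> gv.
have E : (fun h : R => h^-1 *: (g ((h *: 1 + a) *: v + y) - g (a *: v + y))) =
         (fun h : R => h^-1 *: (g (h *: v + (a *: v + y)) - g (a *: v + y))).
  by apply: funext => h; rewrite [_%:A]mulr1 scalerDl addrA.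
by split; rewrite /derivable /derive /= /shift /= ?E //.
Qed.

Lemma derive_translate g c p v : derivable g (c + p) v ->
  is_derive p v (fun z => g (c + z)) ('D_v g (c + p)).
Proof.
move=> gv.
have E : (fun h : R => h^-1 *: (g (c + (h *: v + p)) - g (c + p))) =
         (fun h : R => h^-1 *: (g (h *: v + (c + p)) - g (c + p))).
  by apply: funext => h; rewrite addrCA.
by split; rewrite /derivable /derive /= /shift /= ?E //.
Qed.

Lemma mvt_along_line g y v (h : R) : 0 < h ->
  (forall a, derivable g (a *: v + y) v) ->
  exists2 c, 0 < c < h & g (h *: v + y) - g y = h * 'D_v g (c *: v + y).
Proof.
move=> h_gt0 gv.
have gD a := derive_along_line (gv a).
have g_cont : {within `[0, h], continuous (fun s : R => g (s *: v + y))}.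
  by apply: derivable_within_continuous => s _; have [] := gD s.
have [c c_in] := MVT h_gt0 (fun s _ => gD s) g_cont.
rewrite scale0r add0r subr0 mulrC => E.
by exists c; first by move: c_in; rewrite in_itv.
Qed.

Definition second_diff f x i j (h : R) : R :=
  f (h *: evec R j + (h *: evec R i + x)) - f (h *: evec R i + x)
  - f (h *: evec R j + x) + f x.

Lemma second_diffC f x i j h : second_diff f x i j h = second_diff f x j i h.
Proof. by rewrite /second_diff [h *: evec R j + _]addrCA; ring. Qed.

Lemma second_diff_mvt f x i j (h : R) :
  (forall i x, derivable f x (evec R i)) ->
  (forall i j x, derivable (pderiv f i) x (evec R j)) -> 0 < h ->
  exists xi eta, [/\ 0 < xi < h, 0 < eta < h &
    second_diff f x i j h =
    h * (h * pderiv (pderiv f i) j (eta *: evec R j + (xi *: evec R i + x)))].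
Proof.
move=> d1 d2 h_gt0.
pose g := (fun z => f (h *: evec R j + z)) - f.
have gD p : is_derive p (evec R i) g (pderiv f i (h *: evec R j + p) - pderiv f i p).
  by apply: is_deriveB; [exact: derive_translate | exact: derivableP].
have g_der a : derivable g (a *: evec R i + x) (evec R i).
  exact: @ex_derive _ _ _ _ _ _ _ (gD _).
have [xi xi_in E1] := mvt_along_line (y := x) h_gt0 g_der.
have [_ gDE] := gD (xi *: evec R i + x); rewrite gDE in E1.
have [eta eta_in E2] :=
  mvt_along_line (y := xi *: evec R i + x) h_gt0 (fun a => d2 i j _).
exists xi, eta; split => //.
have gE z : g z = f (h *: evec R j + z) - f z by [].
rewrite -[pderiv (pderiv f i) j _]/('D_(evec R j) (pderiv f i) _) -E2 -E1 !gE.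
by rewrite /second_diff; ring.
Qed.

Lemma ball_second_diff_point x i j (xi eta h r : R) :
  0 < xi < h -> 0 < eta < h -> h + h <= r ->
  ball x r (eta *: evec R j + (xi *: evec R i + x)).
Proof.
move=> /andP[xi_gt0 xi_lt] /andP[eta_gt0 eta_lt] hr; split; first lra.
move=> a b; rewrite /ball /= !mxE.
case: (_ && (b == j)); case: (_ && (b == i)); rewrite /=.
- have -> : x a b - (eta * 1 + (xi * 1 + x a b)) = - (eta + xi) by ring.
  rewrite normrN gtr0_norm; lra.
- have -> : x a b - (eta * 1 + (xi * 0 + x a b)) = - eta by ring.
  rewrite normrN gtr0_norm; lra.
- have -> : x a b - (eta * 0 + (xi * 1 + x a b)) = - xi by ring.
  rewrite normrN gtr0_norm; lra.
- have -> : x a b - (eta * 0 + (xi * 0 + x a b)) = 0 by ring.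
  rewrite normr0; lra.
Qed.

Lemma pderiv_pderivC f : C2 f -> forall x i j,
  pderiv (pderiv f i) j x = pderiv (pderiv f j) i x.
Proof.
move=> [_ [d1 [_ [d2 c2]]]] x i j.
apply/eqP; rewrite -subr_eq0 -normr_le0; apply/ler_addgt0Pr => e e_gt0; rewrite add0r.
have e2_gt0 : 0 < e / 2 by rewrite divr_gt0.
move: (c2 i j x) => /cvgrPdist_lt /(_ _ e2_gt0) /nbhs_ballP [r1 r1_gt0 B1].
move: (c2 j i x) => /cvgrPdist_lt /(_ _ e2_gt0) /nbhs_ballP [r2 r2_gt0 B2].
pose h : R := Num.min r1 r2 / 2.
have h_gt0 : 0 < h by rewrite divr_gt0 // lt_min r1_gt0 r2_gt0.
have [hr1 hr2] : h + h <= r1 /\ h + h <= r2 by rewrite -splitr ge_min lexx ge_min lexx orbT.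
have [xi [eta [xi_in eta_in E1]]] := second_diff_mvt x i j d1 d2 h_gt0.
have [xi' [eta' [xi'_in eta'_in E2]]] := second_diff_mvt x j i d1 d2 h_gt0.
have := B1 _ (ball_second_diff_point x i j xi_in eta_in hr1).
have := B2 _ (ball_second_diff_point x j i xi'_in eta'_in hr2).
(* both mixed partials are read off the same second difference *)
have := etrans (esym E1) (etrans (second_diffC f x i j h) E2).
move=> /(mulfI (lt0r_neq0 h_gt0)) /(mulfI (lt0r_neq0 h_gt0)) ->.
move: (pderiv _ _ x) (pderiv _ _ x) (pderiv _ _ (_ + _)) => a b c close_b close_a.
apply: le_trans (ler_distD c a b) _; rewrite (distrC c b) [leRHS]splitr.
exact/ltW/ltrD.
Qed.

Lemma trmx_hess f x : C2 f -> (hess f x)^T = hess f x.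
Proof. by move=> f_C2; apply/matrixP => i j; rewrite !mxE pderiv_pderivC. Qed.

End Schwarz.

Section Limits.
Variable R : realType.

Lemma squeeze_cvg0 (u v : nat -> R) :
  v @ \oo --> 0 -> (forall k, `|u k| <= v k) -> u @ \oo --> 0.
Proof.
move=> v_cvg uv; apply: (@squeeze_cvgr _ _ _ _ (fun k => - v k) v) => //.
- by apply: nearW => k; rewrite -ler_norml.
- by rewrite -oppr0; apply: cvgN.
Qed.

Lemma cvg_coord n (w : nat -> 'rV[R]_n) (ws : 'rV[R]_n) i :
  w @ \oo --> ws -> (fun k => w k 0 i) @ \oo --> ws 0 i.
Proof. by move=> w_cvg; apply: cvg_comp w_cvg (@coord_continuous R 1 n 0 i ws). Qed.

Lemma cvg_sum_ord m (F : 'I_m -> nat -> R) (L : 'I_m -> R) :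
  (forall i, F i @ \oo --> L i) -> (fun k => \sum_i F i k) @ \oo --> \sum_i L i.
Proof. by move=> F_cvg; apply: cvg_big => //; exact: add_continuous. Qed.

Lemma bform_cvg m (A : nat -> 'M[R]_m) (A0 : 'M[R]_m) z :
  (forall i j, (fun k => A k i j) @ \oo --> A0 i j) ->
  (fun k => bform (A k) z z) @ \oo --> bform A0 z z.
Proof.
move=> A_cvg; under eq_fun do rewrite bformE; rewrite bformE.
by do 2![apply: cvg_sum_ord => ?]; apply: cvgMl; apply: cvgMr.
Qed.

Lemma abs_subgrad_cvg (v p : nat -> R) (v0 p0 : R) :
  v @ \oo --> v0 -> p @ \oo --> p0 ->
  (forall k, abs_subgrad (v k) (p k)) -> abs_subgrad v0 p0.
Proof.
move=> v_cvg p_cvg vp; split.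
  by apply: cvgr_to_le (cvg_norm v_cvg) _; apply: nearW => k; case: (vp k).
have vp_cvg : (fun k => v k * p k - `|p k|) @ \oo --> v0 * p0 - `|p0|.
  exact: cvgB (cvgM v_cvg p_cvg) (cvg_norm p_cvg).
have vp0 : (fun k => v k * p k - `|p k|) = fun=> 0.
  by apply: funext => k; case: (vp k) => _ ->; rewrite subrr.
rewrite vp0 in vp_cvg.
apply/eqP; rewrite -subr_eq0 eq_le.
by rewrite (cvgr_to_le vp_cvg) ?(cvgr_to_ge vp_cvg) //; exact: nearW.
Qed.

Lemma eventually_nzset_subset n (w : nat -> 'rV[R]_n) (ws : 'rV[R]_n) :
  w @ \oo --> ws -> \forall k \near \oo, nzset ws \subset nzset (w k).
Proof.
move=> w_cvg.
suff : \forall k \near \oo, forall i, i \in nzset ws -> i \in nzset (w k).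
  by apply: filterS => k supp; apply/fintype.subsetP.
apply: filter_forall => i; rewrite inE.
have [_|wsi_neq0] := eqVneq (ws 0 i) 0; first by apply: nearW.
have wsi_gt0 : 0 < `|ws 0 i| by rewrite normr_gt0.
move: (cvg_coord (i := i) w_cvg) => /cvgrPdist_lt /(_ _ wsi_gt0).
apply: filterS => k wk_close _; rewrite inE.
by apply: contraTneq wk_close => ->; rewrite subr0 ltxx.
Qed.

End Limits.

Section Stationarity.
Variables (R : realType) (n : nat).
Implicit Types (f : 'rV[R]_n -> R) (w : nat -> 'rV[R]_n) (ws : 'rV[R]_n).

Lemma gradmap_cvg0_stationary f (lam : R) w ws (t : nat -> R) (tmin : R) :
  0 < lam -> (forall i, continuous (pderiv f i)) -> w @ \oo --> ws ->
  0 < tmin -> (forall k, tmin <= t k) ->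
  (fun k => enorm (gradmap f lam (t k) (w k))) @ \oo --> 0 ->
  exists v, v \in subdiff (@l1norm R n) ws /\ grad f ws + lam *: v = 0.
Proof.
move=> lam_gt0 df_cont w_cvg tmin_gt0 tmin_le G_cvg.
have t_gt0 k : 0 < t k := lt_le_trans tmin_gt0 (tmin_le k).
pose G i k := gradmap f lam (t k) (w k) 0 i.
have Gi_cvg i : G i @ \oo --> 0.
  by apply: squeeze_cvg0 G_cvg _ => k; apply: ler_abs_enorm.
have Gt_cvg i : (fun k => G i k / t k) @ \oo --> 0.
  have Gn_cvg : (fun k => `|G i k|) @ \oo --> 0.
    by rewrite -(normr0 R); apply: cvg_norm.
  have : (fun k => `|G i k| / tmin) @ \oo --> 0.
    by rewrite -(mul0r tmin^-1); apply: cvgMl.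
  move/squeeze_cvg0; apply=> k; rewrite normrM normfV (gtr0_norm (t_gt0 k)).
  by rewrite ler_wpM2l // lef_pV2 ?posrE.
pose v0 i := - pderiv f i ws / lam.
have v0_subgrad i : abs_subgrad (v0 i) (ws 0 i).
  apply: (@abs_subgrad_cvg _ (fun k => (G i k - pderiv f i (w k)) / lam)
                             (fun k => w k 0 i - G i k / t k)).
  - rewrite /v0 -sub0r; apply: cvgMl; apply: cvgB => //.
    exact: cvg_comp w_cvg (df_cont i ws).
  - by rewrite -[ws 0 i]subr0; apply: cvgB => //; apply: cvg_coord.
  - by move=> k; apply: gradmap_subgrad.
exists (\row_i v0 i); split.
  by apply: l1_subdiff_abs_subgrad => i; rewrite mxE.
apply/rowP => i; rewrite !mxE /v0 mulrC divfK ?addrN //.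
exact: lt0r_neq0.
Qed.

Lemma hess_psd_of_lambda_min_cvg f w ws (eh : nat -> R) (z : 'rV[R]_n) :
  C2 f -> w @ \oo --> ws -> eh @ \oo --> 0 ->
  (forall k, lambda_min_ge (psubmx (hess f (w k)) (nzset (w k))) (- eh k)) ->
  (forall i, ws 0 i = 0 -> z 0 i = 0) ->
  0 <= bform (hess f ws) z z.
Proof.
move=> f_C2 w_cvg eh_cvg hess_lb z_supp.
have [_ [_ [_ [_ d2f_cont]]]] := f_C2.
have q_cvg : (fun k => bform (hess f (w k)) z z + eh k * sqnorm z) @ \oo -->
             bform (hess f ws) z z.
  rewrite -[X in _ --> X]addr0 -(mul0r (sqnorm z)).
  apply: cvgD; last exact: cvgMl.
  apply: bform_cvg => i j; under eq_fun do rewrite mxE; rewrite mxE.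
  exact: cvg_comp w_cvg (d2f_cont i j ws).
apply: (cvgr_to_ge q_cvg).
apply: filterS (eventually_nzset_subset w_cvg) => k supp_k.
have z_supp_k i : i \notin nzset (w k) -> z 0 i = 0.
  by move=> /(contra (fintype.subsetP supp_k i)); rewrite inE negbK => /eqP; apply: z_supp.
have := lambda_min_ge_psubmx (trmx_hess _ f_C2) (hess_lb k) z_supp_k.
by rewrite -lerBlDr sub0r -mulNr.
Qed.

End Stationarity.

Theorem lemma1 (R : realType) (n : nat) (lam : R) (f : 'rV[R]_n -> R)
  (eg eh : nat -> R) (w : nat -> 'rV[R]_n) (wstar : 'rV[R]_n)
  (t : nat -> R) (tmin tmax : R) :
  0 < lam -> C2 f ->
  (forall k, eg k.+1 <= eg k) -> eg @ \oo --> 0 ->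
  (forall k, eh k.+1 <= eh k) -> eh @ \oo --> 0 ->
  w @ \oo --> wstar ->
  0 < tmin -> tmin <= tmax ->
  (forall k, tmin <= t k <= tmax) ->
  (forall k, enorm (gradmap f lam (t k) (w k)) <= eg k /\
             lambda_min_ge (psubmx (hess f (w k)) (nzset (w k))) (- eh k)) ->
  (exists v, v \in subdiff (@l1norm R n) wstar /\ grad f wstar + lam *: v = 0) /\
  (forall z : 'rV[R]_n, (forall i, wstar 0 i = 0 -> z 0 i = 0) ->
     0 <= (z *m hess f wstar *m z^T) 0 0).
Proof.
move=> lam_gt0 f_C2 _ eg_cvg _ eh_cvg w_cvg tmin_gt0 _ t_in strong_2o.
have [_ [_ [df_cont _]]] := f_C2.
split.
  apply: (gradmap_cvg0_stationary (t := t)) lam_gt0 df_cont w_cvg tmin_gt0 _ _.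
    by move=> k; case/andP: (t_in k).
  apply: squeeze_cvg0 eg_cvg _ => k.
  by rewrite ger0_norm ?sqrtr_ge0 //; case: (strong_2o k).
move=> z z_supp.
exact: hess_psd_of_lambda_min_cvg f_C2 w_cvg eh_cvg (fun k => (strong_2o k).2) z_supp.
Qed.
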